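(* Let $\mathbf{x}=(\mathbf{x}_1,\dots,\mathbf{x}_n)$ be a Generalized Nash equilibrium of the game $G^{(2)}$ and suppose $i\in\mathcal{T}_I(\mathbf{x})$ for some $i\in[n]$. Then $J_{\mathbf{x}_{-i}}=A(\mathbf{x}_{-i})$.
   Context: $G^{(2)}$ is a Fragile multi-CPR Game: $n,m\ge1$, $[k]=\{1,\dots,k\}$, $C_m=\{(x_1,\dots,x_m)\in[0,1]^m:\sum_j x_j\le1\}$, $\mathcal{C}_n=\prod_{i\in[n]}C_m$, $\mathcal{C}_{-i}=\prod_{[n]\setminus\{i\}}C_m$. A profile is $\mathbf{x}=(\mathbf{x}_1,\dots,\mathbf{x}_n)$, $\mathbf{x}_i=(x_{i1},\dots,x_{im})$; write $\mathbf{x}=(\mathbf{x}_i,\mathbf{x}_{-i})$; $\mathbf{x}_T^{(j)}=\sum_i x_{ij}$, $\mathbf{x}_T^{j|i}=\sum_{\ell\ne i}x_{\ell j}$. Each CPR $j$ has return rate $\mathcal{R}_j(t)>1$ and failure probability $p_j(t)\in[0,1]$; each player $i$ has parameters $a_i,k_i$. $\mathcal{F}_{ij}(t)=(\mathcal{R}_j(t)-1)^{a_i}(1-p_j(t))-k_ip_j(t)$; utility $\mathcal{V}_i(\mathbf{x}_i;\mathbf{x}_{-i})=\sum_j x_{ij}^{a_i}\mathcal{F}_{ij}(\mathbf{x}_T^{(j)})$. Assumption: (1) $p_j(0)=0$, $p_j(t)=1$ for $t\ge1$; (2) $a_i\in(0,1]$, $k_i>0$; (3) each $\mathcal{F}_{ij}$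 (continuous on $[0,1]$) has strictly negative first and second derivatives on $(0,1)$. $\omega_{ij}\in(0,1)$ is the unique zero of $\mathcal{F}_{ij}$ in $(0,1)$. $A(\mathbf{x}_{-i})=\{j:\mathbf{x}_T^{j|i}<\omega_{ij}\}$. $\vartheta_i(\mathbf{x}_{-i})=C_m\cap\big(\prod_{j\in A(\mathbf{x}_{-i})}[0,\omega_{ij}-\mathbf{x}_T^{j|i}]\times\prod_{j\notin A(\mathbf{x}_{-i})}\{0\}\big)$. A Generalized Nash equilibrium is $\mathbf{x}\in\mathcal{C}_n$ with, for all $i$, $\mathbf{x}_i\in\vartheta_i(\mathbf{x}_{-i})$ and $\mathcal{V}_i(\mathbf{x}_i;\mathbf{x}_{-i})\ge\mathcal{V}_i(\mathbf{y};\mathbf{x}_{-i})$ for all $\mathbf{y}\in\vartheta_i(\mathbf{x}_{-i})$. $\psi_{ij}(x;s)=x\,\mathcal{F}_{ij}'(x+s)+a_i\mathcal{F}_{ij}(x+s)$. For a GNE $\mathbf{x}$: $J_{\mathbf{x}_{-i}}=\{j\in A(\mathbf{x}_{-i}):x_{ij}\ne0\}$; $\mathbf{x}_i$ is of Type I if $\sum_{j\in J_{\mathbf{x}_{-i}}}x_{ij}<1$ and $\psi_{ij}(x_{ij};\mathbf{x}_T^{j|i})=0$ for all $j\in J_{\mathbf{x}_{-i}}$; of Type II if $\sum_{j\in J_{\mathbf{x}_{-i}}}x_{ij}=1$ and there is $\kappa_0\ge0$ with $x_{ij}^{a_i-1}\psi_{ij}(x_{ij};\mathbf{x}_T^{j|i})=\kappa_0$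 for all $j\in J_{\mathbf{x}_{-i}}$. $\mathcal{T}_I(\mathbf{x})=\{i\in[n]:\mathbf{x}_i\text{ is of Type I}\}$. *)

From HB Require Import structures.
From mathcomp Require Import all_boot all_order all_algebra.
From mathcomp Require Import all_classical all_reals all_analysis.
Set Implicit Arguments. Unset Strict Implicit. Unset Printing Implicit Defensive.
Import Order.TTheory GRing.Theory Num.Theory.
Import numFieldNormedType.Exports.
Local Open Scope ring_scope.
Local Open Scope classical_set_scope.

Section Game.
Variables (R : realType) (n m : nat).

Definition Ffun (Rj pj : R -> R) (a k : R) (t : R) : R :=
  (Rj t - 1) `^ a * (1 - pj t) - k * pj t.

Definition inC (y : 'I_m -> R) : Prop :=
  (forall j, 0 <= y j <= 1) /\ \sum_(j < m) y j <= 1.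

Definition xminus (x : 'I_n -> 'I_m -> R) (i : 'I_n) (j : 'I_m) : R :=
  \sum_(l < n | l != i) x l j.

Definition inA (omega : 'I_n -> 'I_m -> R) (x : 'I_n -> 'I_m -> R)
  (i : 'I_n) (j : 'I_m) : bool := xminus x i j < omega i j.

Definition inTheta (omega : 'I_n -> 'I_m -> R) (x : 'I_n -> 'I_m -> R)
  (i : 'I_n) (y : 'I_m -> R) : Prop :=
  inC y /\ forall j, (inA omega x i j -> 0 <= y j <= omega i j - xminus x i j)
                  /\ (~~ inA omega x i j -> y j = 0).

(* V_i(y ; x_{-i}) ; note x_T^{(j)} of (y, x_{-i}) is y_j + x_T^{j|i} *)
Definition util (Rr pp : 'I_m -> R -> R) (a k : 'I_n -> R)
  (x : 'I_n -> 'I_m -> R) (i : 'I_n) (y : 'I_m -> R) : R :=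
  \sum_(j < m) (y j) `^ (a i) * Ffun (Rr j) (pp j) (a i) (k i) (y j + xminus x i j).

Definition isGNE (Rr pp : 'I_m -> R -> R) (a k : 'I_n -> R)
  (omega : 'I_n -> 'I_m -> R) (x : 'I_n -> 'I_m -> R) : Prop :=
  forall i, inC (x i) /\ inTheta omega x i (x i) /\
    forall y, inTheta omega x i y -> util Rr pp a k x i y <= util Rr pp a k x i (x i).

Definition psi (Rr pp : 'I_m -> R -> R) (a k : 'I_n -> R) (i : 'I_n) (j : 'I_m)
  (y s : R) : R :=
  y * derive1 (Ffun (Rr j) (pp j) (a i) (k i)) (y + s)
  + a i * Ffun (Rr j) (pp j) (a i) (k i) (y + s).

Definition inJ (omega : 'I_n -> 'I_m -> R) (x : 'I_n -> 'I_m -> R)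
  (i : 'I_n) (j : 'I_m) : bool := inA omega x i j && (x i j != 0).

Definition TypeI (Rr pp : 'I_m -> R -> R) (a k : 'I_n -> R)
  (omega : 'I_n -> 'I_m -> R) (x : 'I_n -> 'I_m -> R) (i : 'I_n) : Prop :=
  \sum_(j < m | inJ omega x i j) x i j < 1 /\
  forall j, inJ omega x i j -> psi Rr pp a k i j (x i j) (xminus x i j) = 0.

End Game.

From HB Require Import structures.
From mathcomp Require Import all_boot all_order all_algebra.
From mathcomp Require Import all_classical all_reals all_analysis.
From mathcomp Require Import lra.
Set Implicit Arguments.
Unset Strict Implicit.
Unset Printing Implicit Defensive.
Import Order.TTheory GRing.Theory Num.Theory.
Import numFieldNormedType.Exports.
Local Open Scope ring_scope.
Local Open Scope classical_set_scope.

(* Suppose player [i] leaves a resource [j] of [A(x_{-i})] unused.  Type I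
   means [i]'s budget is not exhausted, so [i] may move a small amount
   [0 < e < omega_ij - x_T^{j|i}] to [j].  Since [F_ij(0) > 0] and [omega_ij]
   is the only zero of [F_ij] in [(0, 1)], the intermediate value theorem
   gives [F_ij > 0] on [[0, omega_ij)], so this deviation raises [V_i] by
   [e^{a_i} F_ij(e + x_T^{j|i}) > 0], contradicting the equilibrium. *)

Lemma gt0_before_unique_root (R : realType) (F : R -> R) (w t : R) :
  {within `[0, 1], continuous F} -> 0 < F 0 -> 0 < w < 1 ->
  (forall c, 0 < c < 1 -> F c = 0 -> c = w) -> 0 <= t < w -> 0 < F t.
Proof.
move=> cF F0 /andP[w0 w1] root_w /andP[t0 tw].
have t1 : t < 1 by rewrite (lt_trans tw).
rewrite ltNge; apply/negP => Ft.
have sub01 : `[0, t] `<=` `[0, 1].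
  by move=> z /=; rewrite !in_itv /= => /andP[-> zt]; rewrite (le_trans zt) ?ltW.
have [|c] := @IVT R F 0 t 0 t0 (continuous_subspaceW sub01 cF).
  by rewrite ge_min Ft orbT le_max (ltW F0).
rewrite in_itv /= => /andP[c0 ct] Fc.
have [c_eq0|c_neq0] := eqVneq c 0; first by rewrite c_eq0 in Fc; rewrite Fc ltxx in F0.
have c_gt0 : 0 < c by rewrite lt_neqAle eq_sym c_neq0.
have := root_w c; rewrite c_gt0 (le_lt_trans ct t1) => /(_ isT Fc) c_w.
by move: tw; rewrite -c_w ltNge ct.
Qed.

Lemma Ffun0_gt0 (R : realType) (Rj pj : R -> R) (a k : R) :
  pj 0 = 0 -> 1 < Rj 0 -> 0 < Ffun Rj pj a k 0.
Proof.
by move=> p0 R0; rewrite /Ffun p0 subr0 mulr1 mulr0 subr0 powR_gt0 // subr_gt0.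
Qed.

Lemma exists_pos_below (R : realFieldType) (u v : R) :
  0 < u -> 0 < v -> exists e : R, [/\ 0 < e, e < u & e <= v].
Proof.
move=> u0 v0; exists (Num.min u v / 2).
have : 0 < Num.min u v by rewrite lt_min u0.
have : Num.min u v <= u /\ Num.min u v <= v by rewrite !ge_min !lexx orbT.
move: (Num.min u v) => q [qu qv] q0; split; lra.
Qed.

Section Deviation.
Variables (R : realType) (n m : nat).
Variables (Rr pp : 'I_m -> R -> R) (a k : 'I_n -> R) (omega : 'I_n -> 'I_m -> R).
Variables (x : 'I_n -> 'I_m -> R) (i : 'I_n).

Definition set_coord (y : 'I_m -> R) (j : 'I_m) (e : R) : 'I_m -> R :=
  fun l => if l == j then e else y l.

Lemma sum_set_coord (y : 'I_m -> R) j e :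
  \sum_(l < m) set_coord y j e l = \sum_(l < m) y l - y j + e.
Proof.
rewrite (bigD1 j) //= [in RHS](bigD1 j) //= /set_coord eqxx.
under eq_bigr => l /negbTE -> do []; lra.
Qed.

Lemma util_set_coord (y : 'I_m -> R) j e :
  util Rr pp a k x i (set_coord y j e) =
  util Rr pp a k x i y
  - y j `^ a i * Ffun (Rr j) (pp j) (a i) (k i) (y j + xminus x i j)
  + e `^ a i * Ffun (Rr j) (pp j) (a i) (k i) (e + xminus x i j).
Proof.
rewrite /util (bigD1 j) //= [in RHS](bigD1 j) //= /set_coord eqxx.
under eq_bigr => l /negbTE -> do []; lra.
Qed.

Lemma inTheta_set_coord (y : 'I_m -> R) j e :
  inTheta omega x i y -> inA omega x i j ->
  0 <= e <= omega i j - xminus x i j ->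
  \sum_(l < m) y l - y j + e <= 1 ->
  inTheta omega x i (set_coord y j e).
Proof.
move=> [[y01 sum_y] feasible_y] Aj /andP[e0 e_le] sum_e.
have rest_ge0 : 0 <= \sum_(l < m) y l - y j.
  rewrite (bigD1 j) //= [y j + _]addrC addrK.
  by apply: sumr_ge0 => l _; have /andP[] := y01 l.
split; [split|].
- move=> l; rewrite /set_coord; case: eqP => // _.
  by rewrite e0 (le_trans _ sum_e) // lerDr.
- by rewrite sum_set_coord.
- move=> l; rewrite /set_coord; case: eqP => [->|_]; last exact: feasible_y.
  by rewrite Aj; split => // _; rewrite e0.
Qed.

Lemma xminus_ge0 j :
  (forall l, inC (x l)) -> 0 <= xminus x i j.
Proof. by move=> xC; apply: sumr_ge0 => l _; have [/(_ j) /andP[]] := xC l. Qed.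

Lemma sum_strategy_inJ :
  inTheta omega x i (x i) ->
  \sum_(l < m) x i l = \sum_(l < m | inJ omega x i l) x i l.
Proof.
move=> [_ feasible]; rewrite (bigID (inJ omega x i)) /=.
rewrite [X in _ + X]big1 ?addr0 // => l.
rewrite /inJ negb_and => /orP[notA|/negPn/eqP //].
by have [_ /(_ notA)] := feasible l.
Qed.

End Deviation.

Theorem lemma5 (R : realType) (n m : nat) (Hn : (0 < n)%N) (Hm : (0 < m)%N)
  (Rr pp : 'I_m -> R -> R) (a k : 'I_n -> R) (omega : 'I_n -> 'I_m -> R)
  (HR : forall j t, 1 < Rr j t)
  (Hp0 : forall j, pp j 0 = 0)
  (Hp1 : forall j t, 1 <= t -> pp j t = 1)
  (Hp01 : forall j t, 0 <= pp j t <= 1)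
  (Ha : forall i, 0 < a i <= 1)
  (Hk : forall i, 0 < k i)
  (HFc : forall i j, {within `[0, 1], continuous (Ffun (Rr j) (pp j) (a i) (k i))})
  (HFd : forall i j t, 0 < t < 1 ->
     derivable (Ffun (Rr j) (pp j) (a i) (k i)) t 1 /\
     derive1 (Ffun (Rr j) (pp j) (a i) (k i)) t < 0 /\
     derivable (derive1 (Ffun (Rr j) (pp j) (a i) (k i))) t 1 /\
     derive1 (derive1 (Ffun (Rr j) (pp j) (a i) (k i))) t < 0)
  (Homega : forall i j, 0 < omega i j < 1 /\
     Ffun (Rr j) (pp j) (a i) (k i) (omega i j) = 0 /\
     forall t, 0 < t < 1 -> Ffun (Rr j) (pp j) (a i) (k i) t = 0 -> t = omega i j)
  (x : 'I_n -> 'I_m -> R)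
  (HGNE : isGNE Rr pp a k omega x)
  (i : 'I_n) (HI : TypeI Rr pp a k omega x i) :
  forall j, inJ omega x i j = inA omega x i j.
Proof.
move=> j; rewrite /inJ; case Aj: (inA omega x i j) => //=; apply/eqP => xij0.
have [_ [feasible_xi optimal_xi]] := HGNE i.
have xC l : inC (x l) by have [] := HGNE l.
have [e [e_gt0 e_lt e_le]] : exists e : R,
    [/\ 0 < e, e < omega i j - xminus x i j
      & e <= 1 - \sum_(l < m | inJ omega x i l) x i l].
  by apply: exists_pos_below; rewrite subr_gt0 //; case: HI.
have deviation : inTheta omega x i (set_coord (x i) j e).
  apply: inTheta_set_coord => //; first by rewrite !ltW.
  by rewrite (sum_strategy_inJ feasible_xi) xij0 subr0 -lerBrDl.
have [omega01 [_ omega_root]] := Homega i j.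
have F_gt0 : 0 < Ffun (Rr j) (pp j) (a i) (k i) (e + xminus x i j).
  apply: gt0_before_unique_root omega01 omega_root _ => //.
  - exact: Ffun0_gt0.
  - by rewrite addr_ge0 ?(ltW e_gt0) ?xminus_ge0 //= -ltrBrDr.
have := optimal_xi _ deviation; rewrite leNgt => /negP; apply.
have /andP[a_gt0 _] := Ha i.
rewrite util_set_coord xij0 powR0 ?gt_eqF // mul0r subr0 ltrDl.
by rewrite mulr_gt0 ?powR_gt0.
Qed.
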